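(* Let $n\ge2$ be an integer. (1) For $2\le k\le n$, let $x_1^{(n-1,k-1)}$ denote the smallest real root of $x\mapsto K_{k-1}^{(n-1)}(x)$. Then $K_k^{(n)}(x)\ge K_k^{(n)}(x+1)$ for all real $x$ with $0\le x\le x_1^{(n-1,k-1)}$. (2) For all $k\in[0:n]$ and all integers $x\in[0:n]$, \[ \left|K_k^{(n)}(x)\right|<2^{\frac n2\left(1+H\left(\frac kn\right)-H\left(\frac xn\right)+\frac1n\log_2(n+1)\right)}, \] where $H(p)=-p\log_2p-(1-p)\log_2(1-p)$ is the binary entropy function (with $H(0)=H(1)=0$).
   Context: For integers $n\ge1$, $k\in[0:n]$ and real $x$, the Krawtchouk polynomial is $K_k^{(n)}(x):=\sum_{j=0}^{k}(-1)^{j}\binom{x}{j}\binom{n-x}{k-j}$, with generalized binomial coefficients $\binom{x}{j}=\frac{x(x-1)\cdots(x-j+1)}{j!}$. For $k\ge1$, $x\mapsto K_k^{(n)}(x)$ has $k$ distinct real roots. *)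

From Stdlib Require Import Reals Lra Lia Arith Factorial.
Open Scope R_scope.

Fixpoint fallfact (x : R) (j : nat) : R :=
  match j with
  | O => 1
  | S j' => fallfact x j' * (x - INR j')
  end.

Definition gbinom (x : R) (j : nat) : R := fallfact x j / INR (fact j).

Definition kraw (n k : nat) (x : R) : R :=
  sum_f_R0 (fun j => (-1) ^ j * gbinom x j * gbinom (INR n - x) (k - j)) k.

Definition log2 (x : R) : R := ln x / ln 2.

Definition plog2p (p : R) : R := if Req_EM_T p 0 then 0 else p * log2 p.

Definition Hbin (p : R) : R := - plog2p p - plog2p (1 - p).

(* (1): Pascal's rule for the generalized binomial coefficients gives the difference
   equation K_k^(n)(x) - K_k^(n)(x+1) = 2 K_(k-1)^(n-1)(x).  Its right-hand side is
   continuous and equals 2 C(n-1,k-1) > 0 at x = 0, so it is nonnegative up to its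
   first root.
   (2): comparing the coefficients of Z^k W^k in
     sum_x C(n,x) ((1-Z)(1-W))^x ((1+Z)(1+W))^(n-x) = (2 + 2 Z W)^n
   gives sum_x C(n,x) K_k(x)^2 = 2^n C(n,k); the terms at x = 0 and x = n are positive,
   so C(n,x) K_k(x)^2 < 2^n C(n,k).  Both binomial coefficients are then estimated with
   the binomial distribution of parameter p = j/n: its mass at j is C(n,j) 2^(-n H(p)),
   which is at most 1 and, j being the mode, at least 1/(n+1). *)

From Stdlib Require Import Reals Lra Lia Factorial.
From mathcomp Require all_boot all_order all_algebra Rstruct.
From mathcomp.algebra_tactics Require ring.
Open Scope R_scope.

Module Krawtchouk.
Import all_boot all_order all_algebra ring Rstruct.
Import GRing.Theory Num.Theory.
Local Open Scope ring_scope.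

Lemma coef_exp1DZX (R : comNzRingType) (c : R) m i :
  ((1 + c *: 'X) ^+ m : {poly R})`_i = c ^+ i *+ 'C(m, i).
Proof.
elim: m i => [|m IH] [|i]; first by rewrite expr0 coef1.
- by rewrite expr0 coef1 bin0n.
- by rewrite exprSr mulrDr mulr1 coefD -scalerAr coefZ coefMX IH !bin0 mulr0 addr0.
rewrite exprSr mulrDr mulr1 coefD -scalerAr coefZ coefMX !IH binS mulrnDr exprS.
by rewrite mulrnAr addrC.
Qed.

Section Ring.
Variable R : comNzRingType.

Definition krawn (n k x : nat) : R :=
  \sum_(j < k.+1) (-1) ^+ j * 'C(x, j)%:R * 'C(n - x, k - j)%:R.

Lemma coef_krawn_genfun n k x :
  ((1 - 'X) ^+ x * (1 + 'X) ^+ (n - x) : {poly R})`_k = krawn n k x.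
Proof.
rewrite coefM; apply: eq_bigr => j _.
have := coef_exp1DZX R (-1) x j; rewrite scaleN1r => ->.
have := coef_exp1DZX R 1 (n - x) (k - j); rewrite scale1r => ->.
by rewrite expr1n !mulr_natr.
Qed.

Lemma krawn_orthogonal n k l :
  \sum_(x < n.+1) krawn n k x * krawn n l x *+ 'C(n, x)
  = (k == l)%:R * 'C(n, k)%:R * 2 ^+ n.
Proof.
pose A x : {poly R} := (1 - 'X) ^+ x * (1 + 'X) ^+ (n - x).
pose Z : {poly {poly R}} := 'X; pose W : {poly {poly R}} := ('X : {poly R})%:P.
have AZW x : (A x)^:P * (A x)%:P
    = ((1 + Z) * (1 + W)) ^+ (n - x) * ((1 - Z) * (1 - W)) ^+ x.
  rewrite /A !rmorphM !rmorphXn !rmorphB !rmorphD !rmorph1 /= map_polyX -/W -/Z !exprMn.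
  ring.
have sumAZW : \sum_(x < n.+1) (A x)^:P * (A x)%:P *+ 'C(n, x)
    = (1 + 'X *: Z) ^+ n *+ 2 ^ n.
  under eq_bigr do rewrite AZW.
  rewrite -exprDn.
  have -> : (1 + Z) * (1 + W) + (1 - Z) * (1 - W) = (1 + W * Z) *+ 2 by ring.
  by rewrite mul_polyC -mulr_natr exprMn -natrX mulr_natr.
have := congr1 (fun p : {poly {poly R}} => (p`_k)`_l) sumAZW.
rewrite !coef_sum coefMn coefMn coef_exp1DZX coefMn coefXn /= => E.
rewrite eq_sym -natrX !mulr_natr -{}E; apply: eq_bigr => x _.
by rewrite !coefMn coefMC coef_map coefCM !coef_krawn_genfun.
Qed.

Lemma krawn_at0 n k : krawn n k 0 = 'C(n, k)%:R.
Proof.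
rewrite /krawn big_ord_recl bin0 expr0 !mul1r !subn0 big1 ?addr0 // => i _.
by rewrite bin0n mulr0 mul0r.
Qed.

Lemma krawn_atn n k : krawn n k n = (-1) ^+ k * 'C(n, k)%:R.
Proof.
rewrite /krawn subnn big_ord_recr /= subnn bin0 mulr1 big1 ?add0r // => i _.
by rewrite bin0n subn_eq0 leqNgt ltn_ord mulr0.
Qed.
End Ring.
Arguments krawn {R}.

Lemma binom_krawn_sq_lt (R : realDomainType) n k x :
  (0 < n)%N -> (k <= n)%N -> (x <= n)%N ->
  'C(n, x)%:R * krawn n k x ^+ 2 < 'C(n, k)%:R * 2 ^+ n :> R.
Proof.
move=> n_gt0 kn xn.
have := krawn_orthogonal R n k k; rewrite eqxx mul1r => <-.
pose y : 'I_n.+1 := if x == 0%N then ord_max else ord0.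
have Ky : krawn n k y * krawn n k y *+ 'C(n, y) = 'C(n, k)%:R ^+ 2 :> R.
  rewrite /y; case: (x =P 0%N) => _ /=; last by rewrite krawn_at0 bin0 expr2.
  by rewrite krawn_atn binn -expr2 exprMn sqrr_sign mul1r.
rewrite (bigD1 (inord x)) //= inordK ?ltnS // -expr2 mulr_natl ltrDl.
have y_neq_x : y != inord x.
  rewrite /y -val_eqE /= inordK ?ltnS //.
  by case: (x =P 0%N) => [->|/eqP x_neq0] /=; [rewrite -lt0n | rewrite eq_sym].
rewrite (bigD1 y) //=.
apply: ltr_pwDl; first by rewrite Ky exprn_gt0 // ltr0n bin_gt0.
by apply: sumr_ge0 => i _; apply: mulrn_wge0; exact: sqr_ge0.
Qed.

Lemma fallfact_INR m j : fallfact (INR m) j = INR (m ^_ j).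
Proof.
elim: j => [|j IH] //=; rewrite IH ffactnSr.
case: (leqP j m) => [jm | /ffact_small ->]; last by rewrite mul0n /= Rmult_0_l.
by rewrite mult_INR (minus_INR _ _ (elimT leP jm)).
Qed.

Lemma gbinom_INR m j : gbinom (INR m) j = INR 'C(m, j).
Proof.
have := INR_fact_neq_0 j; rewrite factE => fact_neq0.
by rewrite /gbinom fallfact_INR -bin_ffact mult_INR factE /Rdiv Rmult_assoc Rinv_r ?Rmult_1_r.
Qed.

Lemma kraw_INR n k x : (x <= n)%N -> kraw n k (INR x) = krawn n k x.
Proof.
move=> xn; rewrite /kraw sum_f_R0E big_mkord; apply: eq_bigr => j _.
by rewrite -(minus_INR _ _ (elimT leP xn)) !gbinom_INR !INRE RpowE.
Qed.

Lemma C_INR n k : (k <= n)%N -> Binomial.C n k = INR 'C(n, k).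
Proof.
move=> kn; have := INR_fact_neq_0 k; have := INR_fact_neq_0 (n - k).
rewrite !factE => fact_nk_neq0 fact_k_neq0.
rewrite /Binomial.C !factE -(bin_fact kn) !mult_INR /Rdiv Rmult_assoc Rinv_r ?Rmult_1_r //.
exact: Rmult_integral_contrapositive_currified.
Qed.

Local Open Scope R_scope.

Lemma kraw_at0 n k : (k <= n)%coq_nat -> kraw n k 0 = Binomial.C n k.
Proof. by move=> /leP kn; rewrite (kraw_INR n k 0) // krawn_at0 C_INR // INRE. Qed.

Lemma C_kraw_sq_lt n k x : (0 < n)%coq_nat -> (k <= n)%coq_nat -> (x <= n)%coq_nat ->
  Binomial.C n x * kraw n k (INR x) ^ 2 < 2 ^ n * Binomial.C n k.
Proof.
move=> /ltP n_gt0 /leP kn /leP xn.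
rewrite kraw_INR // !C_INR // !INRE !RpowE RmultE Rmult_comm RmultE.
apply/RltP; exact: binom_krawn_sq_lt.
Qed.
End Krawtchouk.

Lemma continuity_fallfact g j : continuity g -> continuity (fun x => fallfact (g x) j).
Proof.
  intro g_cont; induction j as [|j IH]; simpl.
  - apply continuity_const; intros a b; reflexivity.
  - apply (continuity_mult (fun x => fallfact (g x) j) (fun x => g x - INR j)); [exact IH|].
    apply (continuity_minus g (fun _ => INR j)); [exact g_cont|].
    apply continuity_const; intros a b; reflexivity.
Qed.

Lemma continuity_gbinom g j : continuity g -> continuity (fun x => gbinom (g x) j).
Proof.
  intro g_cont; unfold gbinom, Rdiv.
  apply (continuity_mult (fun x => fallfact (g x) j) (fun _ => / INR (fact j))).
  - exact (continuity_fallfact g j g_cont).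
  - apply continuity_const; intros a b; reflexivity.
Qed.

Lemma continuity_sum_f_R0 (F : nat -> R -> R) N :
  (forall j, continuity (F j)) -> continuity (fun x => sum_f_R0 (fun j => F j x) N).
Proof.
  intro F_cont; induction N as [|N IH]; simpl.
  - exact (F_cont 0%nat).
  - exact (continuity_plus _ (F (S N)) IH (F_cont (S N))).
Qed.

Lemma continuity_kraw n k : continuity (kraw n k).
Proof.
  assert (id_cont : continuity (fun x => x)) by exact (derivable_continuous _ derivable_id).
  apply (continuity_sum_f_R0 (fun j x => (-1) ^ j * gbinom x j * gbinom (INR n - x) (k - j))).
  intro j.
  apply (continuity_mult (fun x => (-1) ^ j * gbinom x j) (fun x => gbinom (INR n - x) (k - j))).
  - apply (continuity_mult (fun _ => (-1) ^ j) (fun x => gbinom x j)).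
    + apply continuity_const; intros a b; reflexivity.
    + exact (continuity_gbinom (fun x => x) j id_cont).
  - apply (continuity_gbinom (fun x => INR n - x)).
    apply (continuity_minus (fun _ => INR n) (fun x => x)); [|exact id_cont].
    apply continuity_const; intros a b; reflexivity.
Qed.

Lemma ge0_before_first_root (f : R -> R) a x :
  continuity f -> a <= x -> 0 < f a -> (forall y, a <= y < x -> f y <> 0) -> 0 <= f x.
Proof.
  intros f_cont ax fa_pos no_root.
  destruct (Rle_lt_dec 0 (f x)) as [fx_ge0|fx_neg]; [exact fx_ge0|].
  destruct (IVT (fun y => - f y) a x) as [z [[az zx] fz]].
  - exact (continuity_opp f f_cont).
  - destruct ax as [ax|ax]; [exact ax|subst; lra].
  - lra.
  - lra.
  - destruct zx as [zx|zx]; [exfalso; apply (no_root z); lra|subst; lra].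
Qed.

Lemma gbinom_0 y : gbinom y 0 = 1.
Proof. unfold gbinom; simpl; field. Qed.

Lemma fallfact_add1 x j : fallfact (x + 1) (S j) = (x + 1) * fallfact x j.
Proof.
  induction j as [|j IH].
  - simpl; ring.
  - change (fallfact (x + 1) (S (S j))) with (fallfact (x + 1) (S j) * (x + 1 - INR (S j))).
    rewrite IH, S_INR; simpl; ring.
Qed.

Lemma gbinom_pascal x j : gbinom (x + 1) (S j) = gbinom x (S j) + gbinom x j.
Proof.
  unfold gbinom; rewrite fallfact_add1.
  change (fallfact x (S j)) with (fallfact x j * (x - INR j)).
  change (fact (S j)) with (S j * fact j)%nat.
  rewrite mult_INR, S_INR.
  pose proof (INR_fact_lt_0 j); pose proof (pos_INR j).
  field; lra.
Qed.

(* kraw n k x is kraw2 k x (INR n - x); separating the two arguments lets Pascal's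
   rule act on each of them. *)
Definition kraw2 (k : nat) (a b : R) : R :=
  sum_f_R0 (fun j => (-1) ^ j * gbinom a j * gbinom b (k - j)) k.

Lemma kraw2_add1_r m a b : kraw2 (S m) a (b + 1) = kraw2 (S m) a b + kraw2 m a b.
Proof.
  unfold kraw2; rewrite !tech5, Nat.sub_diag, !gbinom_0.
  rewrite (sum_eq _ (fun j => (-1) ^ j * gbinom a j * gbinom b (S m - j)
                            + (-1) ^ j * gbinom a j * gbinom b (m - j))).
  - rewrite plus_sum; ring.
  - intros j Hj; replace (S m - j)%nat with (S (m - j)) by lia.
    rewrite gbinom_pascal; ring.
Qed.

Lemma kraw2_add1_l m a b : kraw2 (S m) (a + 1) b = kraw2 (S m) a b - kraw2 m a b.
Proof.
  unfold kraw2; rewrite !(decomp_sum _ (S m)) by lia; simpl pred.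
  rewrite (sum_eq (fun j => (-1) ^ S j * gbinom (a + 1) (S j) * gbinom b (S m - S j))
                  (fun j => (-1) ^ S j * gbinom a (S j) * gbinom b (S m - S j)
                            - (-1) ^ j * gbinom a j * gbinom b (m - j))).
  - rewrite minus_sum, !gbinom_0; ring.
  - intros j Hj; rewrite gbinom_pascal; simpl; ring.
Qed.

Lemma kraw_sub_shift n m x : (1 <= n)%nat ->
  kraw n (S m) x - kraw n (S m) (x + 1) = 2 * kraw (n - 1) m x.
Proof.
  intro n_ge1.
  change (kraw2 (S m) x (INR n - x) - kraw2 (S m) (x + 1) (INR n - (x + 1))
          = 2 * kraw2 m x (INR (n - 1) - x)).
  replace (INR n - x) with ((INR (n - 1) - x) + 1) by (rewrite minus_INR by lia; simpl; lra).
  replace (INR n - (x + 1)) with (INR (n - 1) - x) by (rewrite minus_INR by lia; simpl; lra).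
  rewrite kraw2_add1_r, kraw2_add1_l; ring.
Qed.

Lemma C_pos n k : 0 < C n k.
Proof.
  unfold C; apply Rdiv_lt_0_compat; [apply INR_fact_lt_0|].
  apply Rmult_lt_0_compat; apply INR_fact_lt_0.
Qed.

Lemma kraw_ge_shift_before_first_root n k x1 x : (1 <= k <= n)%nat ->
  (forall y, kraw (n - 1) (k - 1) y = 0 -> x1 <= y) ->
  0 <= x <= x1 -> kraw n k x >= kraw n k (x + 1).
Proof.
  intros Hk first_root Hx.
  assert (K_ge0 : 0 <= kraw (n - 1) (k - 1) x).
  { apply (ge0_before_first_root _ 0); [apply continuity_kraw | lra | |].
    - rewrite Krawtchouk.kraw_at0 by lia; apply C_pos.
    - intros y Hy K_root; pose proof (first_root y K_root); lra. }
  pose proof (kraw_sub_shift n (k - 1) x ltac:(lia)) as shift.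
  replace (S (k - 1)) with k in shift by lia.
  lra.
Qed.

Lemma ln2_pos : 0 < ln 2.
Proof. rewrite <- ln_1; apply ln_increasing; lra. Qed.

Lemma Rpower2_log2 y : 0 < y -> Rpower 2 (log2 y) = y.
Proof.
  intro y_pos; pose proof ln2_pos.
  unfold Rpower, log2; replace (ln y / ln 2 * ln 2) with (ln y) by (field; lra).
  exact (exp_ln y y_pos).
Qed.

Lemma plog2p_0 : plog2p 0 = 0.
Proof. unfold plog2p; destruct (Req_EM_T 0 0); [reflexivity|congruence]. Qed.

Lemma plog2p_1 : plog2p 1 = 0.
Proof.
  unfold plog2p, log2; destruct (Req_EM_T 1 0); [reflexivity|].
  rewrite ln_1; unfold Rdiv; ring.
Qed.

Lemma Hbin_0 : Hbin 0 = 0.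
Proof. unfold Hbin; rewrite Rminus_0_r, plog2p_0, plog2p_1; ring. Qed.

Lemma Hbin_1 : Hbin 1 = 0.
Proof. unfold Hbin; rewrite Rminus_diag, plog2p_0, plog2p_1; ring. Qed.

Lemma pow_mul_pow_entropy n x : (0 < n)%nat -> (x <= n)%nat ->
  (INR x / INR n) ^ x * (1 - INR x / INR n) ^ (n - x)
  = Rpower 2 (- (INR n * Hbin (INR x / INR n))).
Proof.
  intros n_pos xn.
  assert (N_pos : 0 < INR n) by (apply lt_0_INR; lia).
  destruct (Nat.eq_dec x 0) as [->|x_neq0].
  { replace (INR 0 / INR n) with 0 by (simpl; field; lra).
    rewrite Hbin_0, Rmult_0_r, Ropp_0, Rpower_O, Rminus_0_r, pow1 by lra; simpl; ring. }
  destruct (Nat.eq_dec x n) as [->|x_neq_n].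
  { replace (INR n / INR n) with 1 by (field; lra).
    rewrite Hbin_1, Rmult_0_r, Ropp_0, Rpower_O, pow1, Nat.sub_diag by lra; simpl; ring. }
  assert (x_pos : 0 < INR x) by (apply lt_0_INR; lia).
  assert (x_lt_n : INR x < INR n) by (apply lt_INR; lia).
  set (p := INR x / INR n).
  assert (pN : p * INR n = INR x) by (unfold p; field; lra).
  assert (p_pos : 0 < p) by nra.
  assert (q_pos : 0 < 1 - p) by nra.
  assert (Hp : Hbin p = - (p * (ln p / ln 2)) - ((1 - p) * (ln (1 - p) / ln 2))).
  { unfold Hbin, plog2p, log2.
    destruct (Req_EM_T p 0); [lra|]; destruct (Req_EM_T (1 - p) 0); [lra|].
    reflexivity. }
  rewrite Hp; pose proof ln2_pos.
  rewrite <- (exp_ln (p ^ x * (1 - p) ^ (n - x))) by (apply Rmult_lt_0_compat; apply pow_lt; lra).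
  unfold Rpower; f_equal.
  rewrite ln_mult, !ln_pow, minus_INR by (lia || lra || (apply pow_lt; lra)).
  unfold p; field; lra.
Qed.

Definition binom_pmf (n : nat) (p : R) (j : nat) : R := C n j * p ^ j * (1 - p) ^ (n - j).

Lemma sum_binom_pmf n p : sum_f_R0 (binom_pmf n p) n = 1.
Proof.
  unfold binom_pmf; rewrite <- binomial; replace (p + (1 - p)) with 1 by ring.
  apply pow1.
Qed.

Lemma binom_pmf_ge0 n p j : 0 <= p <= 1 -> 0 <= binom_pmf n p j.
Proof.
  intro Hp; unfold binom_pmf; pose proof (C_pos n j).
  apply Rmult_le_pos; [apply Rmult_le_pos|]; try apply pow_le; lra.
Qed.

Lemma binom_pmf_S n p j : (j < n)%nat ->
  binom_pmf n p (S j) * (INR (S j) * (1 - p)) = binom_pmf n p j * (INR (n - j) * p).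
Proof.
  intro jn; unfold binom_pmf; rewrite pascal_step3 by exact jn.
  replace (n - j)%nat with (S (n - S j)) at 2 by lia.
  pose proof (lt_0_INR (S j) (Nat.lt_0_succ j)).
  simpl pow; field; lra.
Qed.

Lemma le_mode_of_unimodal (f : nat -> R) m N :
  (forall j, (j < m)%nat -> f j <= f (S j)) ->
  (forall j, (m <= j < N)%nat -> f (S j) <= f j) ->
  forall j, (j <= N)%nat -> f j <= f m.
Proof.
  intros rising falling j jN.
  assert (before : forall d, (d <= m)%nat -> f (m - d)%nat <= f m).
  { induction d as [|d IH]; intro dm.
    - rewrite Nat.sub_0_r; apply Rle_refl.
    - apply Rle_trans with (f (m - d)%nat); [|apply IH; lia].
      replace (m - d)%nat with (S (m - S d)) by lia; apply rising; lia. }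
  assert (after : forall d, (m + d <= N)%nat -> f (m + d)%nat <= f m).
  { induction d as [|d IH]; intro dN.
    - rewrite Nat.add_0_r; apply Rle_refl.
    - apply Rle_trans with (f (m + d)%nat); [|apply IH; lia].
      replace (m + S d)%nat with (S (m + d)) by lia; apply falling; lia. }
  destruct (Nat.le_gt_cases j m).
  - replace j with (m - (m - j))%nat by lia; apply before; lia.
  - replace j with (m + (j - m))%nat by lia; apply after; lia.
Qed.

Lemma binom_pmf_le_mode n x j : (0 < n)%nat -> (x <= n)%nat -> (j <= n)%nat ->
  binom_pmf n (INR x / INR n) j <= binom_pmf n (INR x / INR n) x.
Proof.
  intros n_pos xn.
  assert (N_pos : 0 < INR n) by (apply lt_0_INR; lia).
  assert (X_le_N : INR x <= INR n) by (apply le_INR; lia).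
  set (p := INR x / INR n).
  assert (pN : p * INR n = INR x) by (unfold p; field; lra).
  assert (Hp : 0 <= p <= 1) by (pose proof (pos_INR x); split; nra).
  apply le_mode_of_unimodal.
  - intros i ix; pose proof (binom_pmf_S n p i ltac:(lia)) as ratio.
    pose proof (binom_pmf_ge0 n p (S i) Hp).
    assert (INR (S i) <= INR x) by (apply le_INR; lia).
    rewrite minus_INR in ratio by lia; rewrite S_INR in *.
    set (c := (INR i + 1) * (1 - p)) in *; set (d := (INR n - INR i) * p) in *.
    assert (c <= d) by (unfold c, d; nra).
    assert (0 < d) by (unfold d; pose proof (pos_INR i); nra).
    nra.
  - intros i Hi; pose proof (binom_pmf_S n p i ltac:(lia)) as ratio.
    pose proof (binom_pmf_ge0 n p i Hp).
    assert (INR x <= INR i) by (apply le_INR; lia).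
    assert (INR i + 1 <= INR n) by (rewrite <- S_INR; apply le_INR; lia).
    rewrite minus_INR in ratio by lia; rewrite S_INR in *.
    set (c := (INR i + 1) * (1 - p)) in *; set (d := (INR n - INR i) * p) in *.
    assert (d <= c) by (unfold c, d; nra).
    assert (0 < c) by (unfold c; pose proof (pos_INR i); nra).
    nra.
Qed.

Lemma term_le_sum_f_R0 (f : nat -> R) N j :
  (forall i, (i <= N)%nat -> 0 <= f i) -> (j <= N)%nat -> f j <= sum_f_R0 f N.
Proof.
  intro f_ge0; induction N as [|N IH]; intro jN.
  - replace j with 0%nat by lia; simpl; lra.
  - rewrite tech5; destruct (Nat.eq_dec j (S N)) as [->|j_neq].
    + pose proof (sum_Rle (fun _ => 0) f N (fun i iN => f_ge0 i ltac:(lia))) as sum_ge0.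
      rewrite sum_cte in sum_ge0; lra.
    + pose proof (IH (fun i iN => f_ge0 i ltac:(lia)) ltac:(lia)).
      pose proof (f_ge0 (S N) (le_n _)); lra.
Qed.

Lemma binom_pmf_entropy n x : (0 < n)%nat -> (x <= n)%nat ->
  binom_pmf n (INR x / INR n) x = C n x * Rpower 2 (- (INR n * Hbin (INR x / INR n))).
Proof.
  intros n_pos xn; unfold binom_pmf; rewrite Rmult_assoc, pow_mul_pow_entropy by lia.
  reflexivity.
Qed.

Lemma C_le_Rpower_entropy n k : (0 < n)%nat -> (k <= n)%nat ->
  C n k <= Rpower 2 (INR n * Hbin (INR k / INR n)).
Proof.
  intros n_pos kn.
  assert (N_pos : 0 < INR n) by (apply lt_0_INR; lia).
  assert (Hp : 0 <= INR k / INR n <= 1).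
  { assert (pN : INR k / INR n * INR n = INR k) by (field; lra).
    assert (INR k <= INR n) by (apply le_INR; lia).
    pose proof (pos_INR k); split; nra. }
  pose proof (term_le_sum_f_R0 (binom_pmf n (INR k / INR n)) n k
                (fun i _ => binom_pmf_ge0 n _ i Hp) kn) as pmf_le.
  rewrite sum_binom_pmf, binom_pmf_entropy, Rpower_Ropp in pmf_le by lia.
  set (U := Rpower 2 (INR n * Hbin (INR k / INR n))) in *.
  assert (U_pos : 0 < U) by apply exp_pos.
  apply Rmult_le_compat_r with (r := U) in pmf_le; [|lra].
  rewrite Rmult_assoc, Rinv_l, Rmult_1_r, Rmult_1_l in pmf_le by lra.
  exact pmf_le.
Qed.

Lemma one_le_succ_mul_C_entropy n x : (0 < n)%nat -> (x <= n)%nat ->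
  1 <= (INR n + 1) * (C n x * Rpower 2 (- (INR n * Hbin (INR x / INR n)))).
Proof.
  intros n_pos xn.
  rewrite <- binom_pmf_entropy, <- S_INR, Rmult_comm, <- sum_cte by lia.
  rewrite <- (sum_binom_pmf n (INR x / INR n)) at 1.
  apply sum_Rle; intros j jn.
  exact (binom_pmf_le_mode n x j n_pos xn jn).
Qed.

Lemma kraw_lt_Rpower_entropy n k x : (0 < n)%nat -> (k <= n)%nat -> (x <= n)%nat ->
  Rabs (kraw n k (INR x)) <
    Rpower 2 ((INR n / 2) *
              (1 + Hbin (INR k / INR n) - Hbin (INR x / INR n)
               + (1 / INR n) * log2 (INR n + 1))).
Proof.
  intros n_pos kn xn.
  assert (N_pos : 0 < INR n) by (apply lt_0_INR; lia).
  pose proof (Krawtchouk.C_kraw_sq_lt n k x n_pos kn xn) as orth.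
  pose proof (C_le_Rpower_entropy n k n_pos kn) as C_le.
  pose proof (one_le_succ_mul_C_entropy n x n_pos xn) as C_ge.
  pose proof (C_pos n x).
  set (K := kraw n k (INR x)) in *.
  set (U := Rpower 2 (INR n * Hbin (INR k / INR n))) in *.
  set (V := Rpower 2 (- (INR n * Hbin (INR x / INR n)))) in *.
  set (E := INR n / 2 * (1 + Hbin (INR k / INR n) - Hbin (INR x / INR n)
                         + 1 / INR n * log2 (INR n + 1))).
  assert (V_pos : 0 < V) by apply exp_pos.
  assert (two_pow_pos : 0 < 2 ^ n) by (apply pow_lt; lra).
  assert (E_sq : Rpower 2 E * Rpower 2 E = 2 ^ n * U * (INR n + 1) * V).
  { rewrite <- Rpower_plus.
    replace (E + E) with (INR n + (INR n * Hbin (INR k / INR n)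
                          + (- (INR n * Hbin (INR x / INR n)) + log2 (INR n + 1))))
      by (unfold E; field; lra).
    rewrite !Rpower_plus, Rpower_pow, Rpower2_log2 by lra.
    fold U V; ring. }
  assert (K_sq : K * K < Rpower 2 E * Rpower 2 E).
  { rewrite E_sq.
    assert (0 <= K * K) by nra.
    assert (C n x * K ^ 2 * ((INR n + 1) * V) < 2 ^ n * U * ((INR n + 1) * V)).
    { apply Rmult_lt_compat_r; [nra | nra]. }
    nra. }
  apply Rsqr_lt_abs_0 in K_sq.
  rewrite (Rabs_pos_eq (Rpower 2 E)) in K_sq by (left; apply exp_pos).
  exact K_sq.
Qed.

Theorem lemma2 (n : nat) (hn : (2 <= n)%nat) :
  (* (1) *)
  (forall (k : nat), (2 <= k <= n)%nat ->
     forall x1 : R,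
       kraw (n - 1) (k - 1) x1 = 0 ->
       (forall y : R, kraw (n - 1) (k - 1) y = 0 -> x1 <= y) ->
       forall x : R, 0 <= x <= x1 -> kraw n k x >= kraw n k (x + 1))
  /\
  (* (2) *)
  (forall (k x : nat), (k <= n)%nat -> (x <= n)%nat ->
     Rabs (kraw n k (INR x)) <
       Rpower 2 ((INR n / 2) *
                 (1 + Hbin (INR k / INR n) - Hbin (INR x / INR n)
                  + (1 / INR n) * log2 (INR n + 1)))).
Proof.
  split.
  - intros k Hk x1 _ first_root x Hx.
    apply (kraw_ge_shift_before_first_root n k x1 x); [lia | exact first_root | exact Hx].
  - intros k x kn xn.
    apply kraw_lt_Rpower_entropy; lia.
Qed.
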